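(* Let $\vec n,\vec m\in\mathbb{Z}_{\ge0}^M$ with $\sum_i n_i=\sum_i m_i=N$ and $\vec n\prec\vec m$. Let $v_{\vec x}=\prod_{i=1}^M\sqrt{x_i!/x_i^{x_i}}$ (with $0^0=1$). Then $v_{\vec m}\le v_{\vec n}$; consequently, for any $\epsilon>0$, the error bound $\mathcal{E}_{\vec n\preceq\vec m}=\epsilon\, v_{\vec m}/v_{\vec n}$ satisfies $\mathcal{E}_{\vec n\preceq\vec m}\le\epsilon$, with equality when $\vec m$ is a permutation of $\vec n$. Furthermore, if $\vec n_1,\vec n_2,\vec m_1,\vec m_2\in\mathbb{Z}_{\ge 0}^M$ all have entry sum $N$, then: (i) if $\vec n_1$ is a permutation of $\vec n_2$ and $\vec n_1\prec\vec m_1\prec\vec m_2$, then $\mathcal{E}_{\vec n_1\preceq\vec m_1}\ge\mathcal{E}_{\vec n_2\preceq\vec m_2}$; (ii) if $\vec n_1\prec\vec n_2\prec\vec m_1$ and $\vec m_1$ is a permutation of $\vec m_2$, then $\mathcal{E}_{\vec n_1\preceq\vec m_1}\le\mathcal{E}_{\vec n_2\preceq\vec m_2}$.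
   Context: Majorization: for vectors $\vec x,\vec y\in\mathbb{R}_{\ge 0}^d$ with entries sorted non-increasingly $x_{[1]}\ge\dots\ge x_{[d]}$, $y_{[1]}\ge\dots\ge y_{[d]}$, $\vec x\prec\vec y$ means $\sum_{i=1}^k x_{[i]}\le\sum_{i=1}^k y_{[i]}$ for all $1\le k<d$ and equality of the total sums. *)

(* Vectors in Z_{>=0}^M are M.-tuples of nat; the real numbers
   are modelled by an arbitrary real closed field R (needed for Num.sqrt). *)
From HB Require Import structures.
From mathcomp Require Import all_boot all_order all_algebra.
Set Implicit Arguments. Unset Strict Implicit. Unset Printing Implicit Defensive.
Import Order.TTheory GRing.Theory Num.Theory.

Definition sort_desc (x : seq nat) : seq nat := sort geq x.

Definition majorized (x y : seq nat) : Prop :=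
  (forall k : nat, (1 <= k)%N -> (k < size x)%N ->
     (sumn (take k (sort_desc x)) <= sumn (take k (sort_desc y)))%N)
  /\ sumn x = sumn y.

Local Open Scope ring_scope.

(* v_x = prod_i sqrt(x_i! / x_i^{x_i}), with 0^0 = 1 (as expn 0 0 = 1) *)
Definition vval (R : rcfType) (x : seq nat) : R :=
  \prod_(xi <- x) Num.sqrt ((xi`!)%:R / (xi ^ xi)%:R).

Definition errB (R : rcfType) (eps : R) (n m : seq nat) : R :=
  eps * vval R m / vval R n.

(* Since [(k+1)!/(k+1)^(k+1) = (k!/k^k) (k/(k+1))^k], the quantity [v_x] is the
   product over [t] of the weights [c_t = sqrt ((t/(t+1))^t)], each raised to the
   multiplicity [#{i | t < x_i}]. The weights are nonincreasing in [t] (a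
   Bernoulli-type estimate), and the tail sums of the multiplicities,
   [\sum_(s >= t) #{i | s < x_i} = \sum_i (x_i - t)^+], increase under
   majorization. Abel summation then gives [v_m <= v_n] whenever [n ≺ m]; the
   claims on the error bound follow as [v] is positive and invariant under
   permutations. *)

From HB Require Import structures.
From mathcomp Require Import all_boot all_order all_algebra.
From mathcomp Require Import ring lra zify.
Import Order.TTheory GRing.Theory Num.Theory.

Set Implicit Arguments.
Unset Strict Implicit.
Unset Printing Implicit Defensive.

Local Open Scope ring_scope.

Section Bernoulli.
Variable R : realDomainType.

Lemma bernoulli_le (u : R) n : 0 <= u <= 1 -> 1 - n%:R * u <= (1 - u) ^+ n.
Proof.
case/andP=> u_ge0 u_le1; elim: n => [|n IH]; first by rewrite mul0r subr0 expr0.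
have n_ge0 : 0 <= n%:R :> R by [].
have := ler_wpM2l (_ : 0 <= 1 - u) IH; rewrite exprS -natr1; nra.
Qed.

(* [(1 + u)^n (1 - n u) <= (1 + u)^n (1 - u)^n = (1 - u^2)^n <= 1]. *)
Lemma expr1D_mul_bernoulli_le1 (u : R) n :
  0 <= u <= 1 -> (1 + u) ^+ n * (1 - n%:R * u) <= 1.
Proof.
move=> u01; have /andP [u_ge0 u_le1] := u01.
have ge0 : 0 <= (1 + u) ^+ n by rewrite exprn_ge0 // addr_ge0.
apply: (le_trans (ler_wpM2l ge0 (bernoulli_le n u01))).
by rewrite -exprMn exprn_ile1 //; nra.
Qed.

End Bernoulli.

Section FactRatio.
Variable R : realFieldType.

Definition fact_ratio (k : nat) : R := (k`!)%:R / (k ^ k)%:R.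

Definition step_ratio (k : nat) : R := (k%:R / k.+1%:R) ^+ k.

Lemma fact_ratioS k : fact_ratio k.+1 = fact_ratio k * step_ratio k.
Proof.
have kk_neq0 : (k%:R ^+ k : R) != 0.
  by rewrite -natrX pnatr_eq0 -lt0n expn_gt0; case: k.
have k1_neq0 : (k.+1%:R : R) != 0 by rewrite pnatr_eq0.
rewrite /fact_ratio /step_ratio factS !natrM !natrX expr_div_n exprS.
by field; rewrite kk_neq0 expf_neq0 // addrC natr1.
Qed.

Lemma fact_ratio_gt0 k : 0 < fact_ratio k.
Proof. by rewrite divr_gt0 // ltr0n ?fact_gt0 // expn_gt0; case: k. Qed.

Lemma step_ratio_ge0 k : 0 <= step_ratio k.
Proof. by rewrite exprn_ge0 // divr_ge0. Qed.

(* With [a = k/(k+1)], [b = (k+1)/(k+2)] and [u = 1/(k(k+2))] one has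
   [b = a (1 + u) = 1 - k u], so [b^(k+1) = a^k (1 + u)^k (1 - k u) <= a^k]. *)
Lemma step_ratio_nonincr k : step_ratio k.+1 <= step_ratio k.
Proof.
case: k => [|k].
  by rewrite /step_ratio expr0 expr1 ler_pdivrMr ?ltr0n // mul1r ler1n.
rewrite /step_ratio -[k.+3%:R]natr1 -[k.+2%:R]natr1.
set x : R := k.+1%:R.
have x_ge1 : 1 <= x by rewrite ler1n.
set u := (x * (x + 2))^-1.
have u01 : 0 <= u <= 1.
  by rewrite invr_ge0 invf_le1; nra.
have b_mul : (x + 1) / (x + 1 + 1) = x / (x + 1) * (1 + u).
  by rewrite /u; field; nra.
have b_sub : (x + 1) / (x + 1 + 1) = 1 - x * u.
  by rewrite /u; field; nra.
rewrite exprSr {1}b_mul b_sub exprMn -mulrA ler_piMr ?expr1D_mul_bernoulli_le1 //.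
by rewrite exprn_ge0 // divr_ge0 //; lra.
Qed.

End FactRatio.

Lemma sqrt_fact_ratio (R : rcfType) v :
  Num.sqrt (fact_ratio R v) = \prod_(0 <= t < v) Num.sqrt (step_ratio R t).
Proof.
elim: v => [|v IH]; first by rewrite big_geq // /fact_ratio fact0 expn0 divr1 sqrtr1.
by rewrite big_nat_recr //= -IH fact_ratioS sqrtrM // divr_ge0.
Qed.

Lemma prod_nat_widen_exp (R : pzSemiRingType) (c : nat -> R) v N : (v <= N)%N ->
  \prod_(0 <= t < v) c t = \prod_(0 <= t < N) c t ^+ (t < v)%N.
Proof.
move=> v_leN; rewrite (big_nat_widen _ _ _ _ _ v_leN) big_mkcond.
by apply: eq_bigr => t _; case: (t < v)%N.
Qed.

Lemma prod_seq_prefix_prod (R : comPzSemiRingType) (c : nat -> R) N x :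
  (forall v, v \in x -> v <= N)%N ->
  \prod_(v <- x) \prod_(0 <= t < v) c t =
    \prod_(0 <= t < N) c t ^+ count (fun v => t < v)%N x.
Proof.
move=> x_leN; rewrite (eq_big_seq _ (fun v vx => prod_nat_widen_exp c (x_leN v vx))).
rewrite exchange_big; apply: eq_bigr => t _.
by rewrite prodrXr -sum1_count; congr (_ ^+ _); rewrite [RHS]big_mkcond.
Qed.

Section TailSums.
Variables (R : numDomainType) (c : nat -> R) (K : nat).
Hypotheses (c_ge0 : forall t, 0 <= c t) (c_nonincr : forall t, c t.+1 <= c t).

Local Notation tail a t := (\sum_(t <= s < K) a s)%N.

(* Abel summation, peeling off the lowest index: the surplus [tail b m - tail a m]
   of exponents can be charged to [c m], the largest factor in the range. *)
Lemma prod_exp_tails_le_mul (a b : nat -> nat) m :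
  (forall t, tail a t <= tail b t)%N ->
  \prod_(m <= s < K) c s ^+ b s <=
    \prod_(m <= s < K) c s ^+ a s * c m ^+ (tail b m - tail a m).
Proof.
move=> tails_le; have [n] := ubnP (K - m); elim: n m => // n IH m.
rewrite ltnS => Km_le.
have [lt_mK | le_Km] := ltnP m K; last by rewrite !big_geq // subnn mulr1.
have := tails_le m; have := tails_le m.+1.
rewrite !(big_ltn lt_mK) in IH * => tail1_le tail0_le.
set A := (\sum_(m.+1 <= s < K) a s)%N in tail1_le tail0_le *.
set B := (\sum_(m.+1 <= s < K) b s)%N in tail1_le tail0_le *.
set PA := \prod_(m.+1 <= s < K) c s ^+ a s.
have le_PB : \prod_(m.+1 <= s < K) c s ^+ b s <= PA * c m ^+ (B - A).
  apply: (le_trans (IH m.+1 _)); first lia.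
  by rewrite ler_wpM2l ?prodr_ge0 // => [s _|]; rewrite ?exprn_ge0 ?lerXn2r ?nnegrE.
have split_exp : (b m + (B - A) = a m + (b m + B - (a m + A)))%N by lia.
apply: (le_trans (ler_wpM2l (exprn_ge0 _ (c_ge0 m)) le_PB)).
by rewrite mulrCA -exprD split_exp exprD mulrCA mulrA.
Qed.

Lemma prod_exp_tails_le (a b : nat -> nat) :
  (forall t, tail a t <= tail b t)%N -> tail a 0 = tail b 0 ->
  \prod_(0 <= s < K) c s ^+ b s <= \prod_(0 <= s < K) c s ^+ a s.
Proof.
move=> tails_le tails0_eq; have := prod_exp_tails_le_mul 0 tails_le.
by rewrite tails0_eq subnn mulr1.
Qed.

End TailSums.

Section Excess.
Local Open Scope nat_scope.

(* [v - t] is truncated, so this is [\sum_i (x_i - t)^+]. *)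
Definition excess (x : seq nat) (t : nat) : nat := \sum_(v <- x) (v - t).

Lemma excess0 x : excess x 0 = sumn x.
Proof. by rewrite /excess sumnE; apply: eq_bigr => v _; rewrite subn0. Qed.

Lemma perm_excess x y t : perm_eq x y -> excess x t = excess y t.
Proof. exact: perm_big. Qed.

Lemma excess_take k x t : excess (take k x) t <= excess x t.
Proof. by rewrite /excess -{2}(cat_take_drop k x) big_cat leq_addr. Qed.

Lemma sumn_le_excess x t : sumn x <= excess x t + size x * t.
Proof. elim: x => [|v x IH] //; rewrite /excess big_cons /= -/(excess x t); lia. Qed.

Lemma excess_ge x t : all (leq t) x -> excess x t + size x * t = sumn x.
Proof.
elim: x => [|v x IH] /=; first by rewrite /excess big_nil.
move=> /andP [t_le_v /IH <-].
rewrite /excess big_cons -/(excess x t); lia.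
Qed.

Lemma excess_filter_gt x t : excess [seq v <- x | t < v] t = excess x t.
Proof.
rewrite /excess big_filter big_mkcond; apply: eq_bigr => v _.
by case: ltnP => // v_le_t; lia.
Qed.

Lemma sorted_geq_filter_gt x t : sorted geq x ->
  [seq v <- x | t < v] = take (count (fun v => t < v) x) x.
Proof. exact: (@sorted_filter_lt _ nat^d t x). Qed.

Lemma sum_count_gt x t N : (forall v, v \in x -> v <= N) ->
  \sum_(t <= s < N) count (fun v => s < v) x = excess x t.
Proof.
move=> x_leN; under eq_bigr => s _ do rewrite -sum1_count big_mkcond.
rewrite exchange_big; apply: eq_big_seq => v /x_leN v_leN /=.
rewrite -[RHS]muln1 -sum_nat_const_nat (big_nat_widen _ _ _ _ _ v_leN).
by rewrite [RHS]big_mkcond.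
Qed.

Lemma perm_sort_desc x : perm_eq (sort_desc x) x.
Proof. exact/permEl/perm_sort. Qed.

Lemma majorized_take x y k : size x = size y -> majorized x y -> k <= size x ->
  sumn (take k (sort_desc x)) <= sumn (take k (sort_desc y)).
Proof.
move=> eq_size [partial_le sum_eq] k_le.
have [->|k_gt0] := posnP k; first by rewrite !take0.
have [k_lt|k_ge] := ltnP k (size x); first exact: partial_le.
rewrite !take_oversize ?size_sort -?eq_size //.
by rewrite !(perm_sumn (perm_sort_desc _)) sum_eq.
Qed.

(* The entries of [sort_desc x] above [t] form a prefix of some length [k], on
   which the excess is [sumn - k t]; for [y] that quantity is only a lower bound. *)
Lemma majorized_excess x y t : size x = size y -> majorized x y ->
  excess x t <= excess y t.
Proof.
move=> eq_size xy.
rewrite -(perm_excess t (perm_sort_desc x)) -(perm_excess t (perm_sort_desc y)).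
set sx := sort_desc x; set sy := sort_desc y.
set k := count (fun v => t < v) sx.
have sx_sorted : sorted geq sx by apply: sort_sorted => u v; apply: leq_total.
have filter_sx := sorted_geq_filter_gt t sx_sorted.
have k_le : k <= size x by rewrite -(size_sort geq x) count_size.
have prefix_gt : all (leq t) (take k sx).
  by rewrite -filter_sx; apply/allP => v; rewrite mem_filter => /andP [/ltnW].
have := excess_ge prefix_gt; have := sumn_le_excess (take k sy) t.
have := excess_take k sy t; have := majorized_take eq_size xy k_le.
rewrite -(excess_filter_gt sx) filter_sx !size_takel ?size_sort -?eq_size // -/sx -/sy -/k.
lia.
Qed.

End Excess.

Lemma leq_mem_sumn v x : v \in x -> (v <= sumn x)%N.
Proof. by move=> vx; rewrite (perm_sumn (perm_to_rem vx)) /= leq_addr. Qed.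

Lemma vval_prod_step_ratio (R : rcfType) N x : (forall v, v \in x -> v <= N)%N ->
  vval R x = \prod_(0 <= t < N) Num.sqrt (step_ratio R t) ^+ count (fun v => t < v)%N x.
Proof.
move=> x_leN; rewrite -prod_seq_prefix_prod //.
by apply: eq_bigr => v _; apply: sqrt_fact_ratio.
Qed.

Lemma vval_gt0 (R : rcfType) x : 0 < vval R x.
Proof. by apply: prodr_gt0 => v _; rewrite sqrtr_gt0 (fact_ratio_gt0 R v). Qed.

Lemma vval_perm (R : rcfType) x y : perm_eq x y -> vval R x = vval R y.
Proof. exact: perm_big. Qed.

Lemma vval_majorized (R : rcfType) x y : size x = size y -> majorized x y ->
  vval R y <= vval R x.
Proof.
move=> eq_size xy; set N := sumn x.
have x_leN v : v \in x -> (v <= N)%N by apply: leq_mem_sumn.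
have y_leN v : v \in y -> (v <= N)%N by rewrite /N xy.2; apply: leq_mem_sumn.
rewrite (vval_prod_step_ratio R x_leN) (vval_prod_step_ratio R y_leN).
apply: prod_exp_tails_le => [t | t | t | ].
- by rewrite sqrtr_ge0.
- by rewrite ler_sqrt ?step_ratio_nonincr ?step_ratio_ge0.
- by rewrite !sum_count_gt // majorized_excess.
- by rewrite !sum_count_gt // !excess0 xy.2.
Qed.

Theorem mainTheorem3 (R : rcfType) (M N : nat) :
  (forall n m : M.-tuple nat,
     sumn n = N -> sumn m = N -> majorized n m ->
     vval R m <= vval R n /\
     (forall eps : R, 0 < eps ->
        errB eps n m <= eps /\ (perm_eq n m -> errB eps n m = eps)))
  /\
  (forall (eps : R) (n1 n2 m1 m2 : M.-tuple nat), 0 < eps ->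
     sumn n1 = N -> sumn n2 = N -> sumn m1 = N -> sumn m2 = N ->
     (perm_eq n1 n2 -> majorized n1 m1 -> majorized m1 m2 ->
        errB eps n2 m2 <= errB eps n1 m1)
     /\
     (majorized n1 n2 -> majorized n2 m1 -> perm_eq m1 m2 ->
        errB eps n1 m1 <= errB eps n2 m2)).
Proof.
have vval_le (x y : M.-tuple nat) : majorized x y -> vval R y <= vval R x.
  by apply: vval_majorized; rewrite !size_tuple.
have vval_ge0 (x : seq nat) : 0 <= vval R x by apply/ltW/vval_gt0.
split=> [n m _ _ nm | eps n1 n2 m1 m2 eps_gt0 _ _ _ _].
  split=> [|eps eps_gt0]; first exact: vval_le.
  have eps_ge0 := ltW eps_gt0.
  rewrite /errB ler_pdivrMr ?vval_gt0 // ler_wpM2l ?vval_le //.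
  split=> // nm_perm.
  by rewrite (vval_perm R nm_perm) mulfK // gt_eqF ?vval_gt0.
have eps_ge0 := ltW eps_gt0.
split=> [n12 _ m12 | n12 _ m12].
  by rewrite /errB -(vval_perm R n12) ler_wpM2r ?invr_ge0 // ler_wpM2l ?vval_le.
rewrite /errB -(vval_perm R m12) -!mulrA ler_wpM2l // ler_wpM2l //.
by rewrite lef_pV2 ?posrE ?vval_gt0 ?vval_le.
Qed.
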